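(* Let $A\in\{0,1\}^{n\times n}$ be the adjacency matrix of a simple undirected graph $G$ on $n\ge 2$ vertices with no isolated vertex, let $\deg_j$ denote the degree of vertex $j$, and let $A_s=A-\frac{1}{n}\mathbb{1}_n\mathbb{1}_n^\top A$, i.e. $(A_s)_{ij}=A_{ij}-\deg_j/n$. Let $\mathcal{G}_s$ be the signed graph on the vertex set of $G$ in which distinct vertices $i,j$ are joined by an edge whose sign is the sign of $(A_s)_{ij}$ (this sign is symmetric in $i,j$ and nonzero). If $\mathcal{G}_s$ is weakly structurally balanced, then $G$ is a disjoint union of complete graphs with no edges between them, namely the parts of the balancing partition.
   Context: A signed graph is weakly structurally balanced if there is a partition $V=V_1\cup\dots\cup V_m$, $m\ge 2$, into nonempty mutually disjoint sets such that every edge between different $V_i$'s is negative and every edge within each $V_i$ is positive. $\mathbb{1}_n$ is the all-ones vector of length $n$. *)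

From HB Require Import structures.
From mathcomp Require Import all_boot all_order all_algebra.
Set Implicit Arguments. Unset Strict Implicit. Unset Printing Implicit Defensive.
Import Order.TTheory GRing.Theory Num.Theory.
Local Open Scope ring_scope.

Definition simple_graph (n : nat) (e : rel 'I_n) : Prop :=
  symmetric e /\ irreflexive e.

Definition adjmx (R : nzRingType) (n : nat) (e : rel 'I_n) : 'M[R]_n :=
  \matrix_(i, j) (e i j)%:R.

Definition deg (n : nat) (e : rel 'I_n) (j : 'I_n) : nat := #|[set i | e i j]|.

(* A_s = A - (1/n) 1_n 1_n^T A ; const_mx 1 is the n x n all-ones matrix 1 1^T *)
Definition As (R : fieldType) (n : nat) (e : rel 'I_n) : 'M[R]_n :=
  adjmx R e - (n%:R)^-1 *: (const_mx 1 *m adjmx R e).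

(* Signed graph given by a real weight matrix W: distinct i, j are joined by an
   edge iff W i j != 0, with the sign of W i j.
   A balancing partition into m parts is given by a labelling f : 'I_n -> 'I_m
   which is surjective (all parts nonempty), with m >= 2, such that every edge
   within a part is positive and every edge between parts is negative. *)
Definition balancing_partition (R : numDomainType) (n : nat) (W : 'M[R]_n)
    (m : nat) (f : 'I_n -> 'I_m) : Prop :=
  (2 <= m)%N /\ (forall k : 'I_m, exists i, f i = k) /\
  forall i j : 'I_n, i != j -> W i j != 0 ->
    (f i = f j -> 0 < W i j) /\ (f i <> f j -> W i j < 0).

Definition weakly_structurally_balanced (R : numDomainType) (n : nat)
    (W : 'M[R]_n) : Prop :=
  exists m (f : 'I_n -> 'I_m), @balancing_partition R n W m f.

(* The entry (A_s)_ij = A_ij - deg_j/n is positive on edges, since a vertex is not its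
   own neighbour so deg_j < n, and negative on non-edges, since deg_j > 0. So off the
   diagonal A_s never vanishes and is positive exactly on the edges of G, while a
   balancing partition makes it positive exactly within parts. *)

From mathcomp Require Import all_boot all_order all_algebra.
Import Order.TTheory GRing.Theory Num.Theory.
Local Open Scope ring_scope.

Lemma As_entry (R : fieldType) (n : nat) (e : rel 'I_n) (i j : 'I_n) :
  As R e i j = (e i j)%:R - n%:R^-1 * (deg e j)%:R.
Proof.
rewrite /As !mxE; congr (_ - _ * _).
rewrite /deg -sum1_card natr_sum [RHS]big_mkcond; apply: eq_bigr => k _.
by rewrite !mxE mul1r inE; case: (e k j).
Qed.

Lemma deg_lt_n (n : nat) (e : rel 'I_n) (j : 'I_n) :
  irreflexive e -> (deg e j < n)%N.
Proof.
move=> irr; rewrite -[n in (_ < n)%N]card_ord -cardsT; apply: proper_card.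
rewrite properT; apply/eqP => degT.
by have := in_setT j; rewrite -degT inE irr.
Qed.

Section SignOfAs.

Variables (R : realFieldType) (n : nat) (e : rel 'I_n) (i j : 'I_n).

Let n_gt0 : 0 < n%:R :> R.
Proof. by rewrite ltr0n (leq_ltn_trans (leq0n i) (ltn_ord i)). Qed.

Lemma As_gt0 : irreflexive e -> e i j -> 0 < As R e i j.
Proof.
move=> irr eij; rewrite As_entry eij subr_gt0 ltr_pdivrMl // mulr1 ltr_nat.
exact: deg_lt_n.
Qed.

Lemma As_lt0 : (0 < deg e j)%N -> ~~ e i j -> As R e i j < 0.
Proof.
move=> deg_gt0 /negbTE eij.
by rewrite As_entry eij subr_lt0 mulr_gt0 ?invr_gt0 ?n_gt0 ?ltr0n.
Qed.

Hypotheses (irr : irreflexive e) (deg_gt0 : (0 < deg e j)%N).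

Lemma As_gt0E : (0 < As R e i j) = e i j.
Proof.
case eij: (e i j); first exact: As_gt0 irr eij.
by apply/negbTE; rewrite -leNgt ltW // As_lt0 ?eij.
Qed.

Lemma As_neq0 : As R e i j != 0.
Proof.
by case eij: (e i j); [rewrite gt_eqF ?As_gt0 | rewrite lt_eqF ?As_lt0 ?eij].
Qed.

End SignOfAs.

Lemma balancing_partition_gt0 (R : numDomainType) (n : nat) (W : 'M[R]_n)
    (m : nat) (f : 'I_n -> 'I_m) (i j : 'I_n) :
  balancing_partition W f -> i != j -> W i j != 0 -> (0 < W i j <-> f i = f j).
Proof.
move=> [_ [_ bal]] ij Wij_neq0; have [same diff] := bal i j ij Wij_neq0.
split=> [Wij_gt0 | /same //].
by case: (f i =P f j) => // /diff /lt_trans/(_ Wij_gt0); rewrite ltxx.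
Qed.

Theorem mainTheorem6 (R : realFieldType) (n : nat) (e : rel 'I_n) :
  (2 <= n)%N -> simple_graph e ->
  (forall j : 'I_n, (0 < deg e j)%N) ->
  weakly_structurally_balanced (As R e) ->
  forall (m : nat) (f : 'I_n -> 'I_m), @balancing_partition R n (As R e) m f ->
  forall i j : 'I_n, i != j -> (e i j <-> f i = f j).
Proof.
move=> _ [_ irr] deg_gt0 _ m f bal i j ij.
rewrite -(As_gt0E R) //; apply: balancing_partition_gt0 => //.
exact: As_neq0.
Qed.
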